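(* Let $(\alpha_n)_{n\ge1}$ and $(\beta_n)_{n\ge1}$ be increasing sequences of real numbers with $\alpha_n\le\beta_n\le\alpha_{n+1}$ for all $n$, $\alpha_1>1$, and $\sum_n\alpha_n^{-\lambda}<\infty$ for every $\lambda>1$. Then: (1) The Euler products $E_1(s)=\prod_n(1-\alpha_n^{-s})^{-1}$ and $E_2(s)=\prod_n(1-\beta_n^{-s})^{-1}$ are well defined and analytic on $\{\operatorname{Re}(s)>1\}$. (2) There exists a function $f$, analytic and nowhere vanishing on $\{\operatorname{Re}(s)>0\}$, such that $E_1(s)=E_2(s)f(s)$ for $\operatorname{Re}(s)>1$. *)

From Stdlib Require Import Reals.
From Coquelicot Require Export Coquelicot.
Open Scope R_scope.

Definition cexp (z : C) : C :=
  (exp (Re z) * cos (Im z), exp (Re z) * sin (Im z)).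

Definition rpow_neg (a : R) (s : C) : C := cexp (Copp s * RtoC (ln a)).

Definition euler_factor (a : R) (s : C) : C := Cinv (Cminus 1 (rpow_neg a s)).

(* Partial Euler product  prod_{k < N} (1 - a_k^(-s))^(-1)  (a_0 is the paper's a_1). *)
Fixpoint euler_partial (a : nat -> R) (s : C) (N : nat) : C :=
  match N with
  | O => 1%C
  | S N' => Cmult (euler_partial a s N') (euler_factor (a N') s)
  end.

Definition euler_product_converges_to (a : nat -> R) (s : C) (L : C) : Prop :=
  filterlim (euler_partial a s) eventually (locally L).

(* Complex analytic (= holomorphic: complex differentiable at every point)
   on the set U. *)
Definition analytic_on (U : C -> Prop) (f : C -> C) : Prop :=
  forall z, U z -> @ex_derive C_AbsRing C_NormedModule f z.

Definition half_plane (c : R) (s : C) : Prop := Re s > c.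

(* For Re s >= sigma the Euler factor satisfies
   |(1 - a^(-s))^(-1) - 1| <= a^(-sigma) / (1 - alpha_1^(-sigma)), so for sigma > 1 both
   products converge, by summability of alpha_n^(-sigma) and beta_n^(-sigma) <= alpha_n^(-sigma).
   Holomorphy of the limit comes from a Weierstrass-type argument: on a small disc the
   derivatives of the partial products are uniformly Cauchy, and the mean value inequality
   on segments turns this into complex differentiability of the limit.
   The quotient f is the product of the factors (1 - beta_n^(-s)) / (1 - alpha_n^(-s)).
   These are close to 1 on Re s > 0 because
   |alpha^(-s) - beta^(-s)| <= |s| / sigma * (alpha^(-sigma) - beta^(-sigma)),
   and the right-hand sides telescope along alpha_1 <= beta_1 <= alpha_2 <= ..., hence are
   summable for every sigma > 0; the same holds for the derivatives. The reciprocal factors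
   give a convergent product as well, so f has no zeros, and E_1 = E_2 f factor by factor. *)

From Stdlib Require Import Reals Lra Lia ClassicalEpsilon.
From Coquelicot Require Import Coquelicot.
Open Scope R_scope.

(** * Complex derivatives *)

Notation is_Cderive f z l := (@is_derive C_AbsRing C_NormedModule f z l).

Lemma is_Cderive_iff (f : C -> C) (z l : C) :
  is_Cderive f z l <->
  (forall eps, 0 < eps -> exists delta, 0 < delta /\ forall h, Cmod h < delta ->
     Cmod (f (z + h) - f z - l * h)%C <= eps * Cmod h).
Proof.
split.
- intros [_ Hd] eps Heps.
  destruct (Hd z (fun P H => H) (mkposreal eps Heps)) as [d Hd'].
  exists d; split; [apply cond_pos|]. intros h Hh.
  specialize (Hd' (z + h)%C).
  change (Cmod (z + h - z) < d -> Cmod (f (z + h) - f z - (z + h - z) * l)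
            <= eps * Cmod (z + h - z))%C in Hd'.
  replace (z + h - z)%C with h in Hd' by ring.
  rewrite Cmult_comm. exact (Hd' Hh).
- intros H. split; [apply is_linear_scal_l|].
  intros x Hx. apply (@is_filter_lim_locally_unique C_AbsRing (AbsRing_NormedModule C_AbsRing)) in Hx.
  subst x. intros [eps Heps].
  destruct (H eps Heps) as [d [Hd0 Hd]].
  exists (mkposreal d Hd0). intros y Hy. change C in y. change (Cmod (y - z) < d)%C in Hy.
  specialize (Hd (y - z)%C Hy). replace (z + (y - z))%C with y in Hd by ring.
  change (Cmod (f y - f z - (y - z) * l) <= eps * Cmod (y - z))%C.
  rewrite Cmult_comm. exact Hd.
Qed.

(* [C] carries two normed-module structures over [C_AbsRing]; their derivatives agree
   because the domination condition only involves the norm, which is [Cmod] for both. *)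
Lemma is_Cderive_of_AbsRing f z l :
  @is_derive C_AbsRing (AbsRing_NormedModule C_AbsRing) f z l -> is_Cderive f z l.
Proof. intros [_ H]. split; [apply is_linear_scal_l | exact H]. Qed.

Lemma is_Cderive_to_AbsRing f z l :
  is_Cderive f z l -> @is_derive C_AbsRing (AbsRing_NormedModule C_AbsRing) f z l.
Proof. intros [_ H]. split; [apply is_linear_scal_l | exact H]. Qed.

Lemma is_Cderive_ext f g z l : (forall y, f y = g y) -> is_Cderive f z l -> is_Cderive g z l.
Proof. apply is_derive_ext. Qed.

Lemma is_Cderive_const (a z : C) : is_Cderive (fun _ => a) z (RtoC 0).
Proof. apply (@is_derive_const C_AbsRing C_NormedModule). Qed.

Lemma is_Cderive_id (z : C) : is_Cderive (fun y => y) z (RtoC 1).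
Proof. apply is_Cderive_of_AbsRing, (@is_derive_id C_AbsRing). Qed.

Lemma is_Cderive_plus f g z df dg :
  is_Cderive f z df -> is_Cderive g z dg -> is_Cderive (fun y => f y + g y)%C z (df + dg)%C.
Proof. apply (@is_derive_plus C_AbsRing C_NormedModule). Qed.

Lemma is_Cderive_minus f g z df dg :
  is_Cderive f z df -> is_Cderive g z dg -> is_Cderive (fun y => f y - g y)%C z (df - dg)%C.
Proof. apply (@is_derive_minus C_AbsRing C_NormedModule). Qed.

Lemma is_Cderive_mult f g z df dg :
  is_Cderive f z df -> is_Cderive g z dg ->
  is_Cderive (fun y => f y * g y)%C z (df * g z + f z * dg)%C.
Proof.
intros Hf Hg. apply is_Cderive_of_AbsRing.
exact (@is_derive_mult C_AbsRing f g z df dg (is_Cderive_to_AbsRing _ _ _ Hf)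
  (is_Cderive_to_AbsRing _ _ _ Hg) Cmult_comm).
Qed.

Lemma is_Cderive_comp f g z df dg :
  is_Cderive f (g z) df -> is_Cderive g z dg -> is_Cderive (fun y => f (g y)) z (dg * df)%C.
Proof.
intros Hf Hg. exact (@is_derive_comp C_AbsRing C_NormedModule f g z df dg Hf (is_Cderive_to_AbsRing _ _ _ Hg)).
Qed.

Lemma is_Cderive_Cinv (z : C) : z <> RtoC 0 -> is_Cderive Cinv z (- / (z * z))%C.
Proof.
intros Hz. apply is_Cderive_iff. intros eps Heps.
assert (Hm : 0 < Cmod z) by (apply Cmod_gt_0; auto).
set (m := Cmod z) in *.
exists (Rmin (m / 2) (eps * (m * m * m) / 2)). split.
{ apply Rmin_pos. lra. apply Rdiv_lt_0_compat; [|lra]. repeat apply Rmult_lt_0_compat; auto. }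
intros h Hh.
assert (H1 : Cmod h < m / 2) by (eapply Rlt_le_trans; [exact Hh| apply Rmin_l]).
assert (H2 : Cmod h < eps * (m * m * m) / 2) by (eapply Rlt_le_trans; [exact Hh| apply Rmin_r]).
assert (Hzh : m / 2 <= Cmod (z + h)%C).
{ pose proof (Cmod_triangle (z + h)%C (- h)%C) as T. rewrite Cmod_opp in T.
  replace (z + h + - h)%C with z in T by ring. fold m in T. lra. }
assert (Hzh0 : (z + h)%C <> RtoC 0) by (intros E; rewrite E, Cmod_0 in Hzh; lra).
replace (/ (z + h) - / z - - / (z * z) * h)%C with (h * h / (z * z * (z + h)))%C by (field; auto).
rewrite Cmod_div by (repeat apply Cmult_neq_0; auto).
rewrite !Cmod_mult. fold m.
assert (0 <= Cmod h) by apply Cmod_ge_0.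
assert (Hm3 : 0 < m * m * (m / 2)) by (repeat apply Rmult_lt_0_compat; lra).
apply Rle_trans with (Cmod h * Cmod h / (m * m * (m / 2))).
- apply Rmult_le_compat_l; [nra|]. apply Rinv_le_contravar; [lra|].
  apply Rmult_le_compat_l; nra.
- apply (Rmult_le_reg_r (m * m * (m / 2))); [lra|].
  unfold Rdiv at 1. rewrite Rmult_assoc, Rinv_l, Rmult_1_r by lra. nra.
Qed.

Lemma is_Cderive_inv_fun f z df :
  is_Cderive f z df -> f z <> RtoC 0 -> is_Cderive (fun y => / f y)%C z (- df / (f z * f z))%C.
Proof.
intros H Hz. pose proof (is_Cderive_comp Cinv f z _ df (is_Cderive_Cinv (f z) Hz) H) as H2.
replace (- df / (f z * f z))%C with (df * - / (f z * f z))%C by (field; auto). exact H2.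
Qed.

Lemma is_Cderive_scal_id (c z : C) : is_Cderive (fun y => c * y)%C z c.
Proof.
pose proof (is_Cderive_mult (fun _ => c) (fun y => y) z _ _ (is_Cderive_const c z) (is_Cderive_id z)) as H.
cbv beta in H. replace (RtoC 0 * z + c * RtoC 1)%C with c in H by ring. exact H.
Qed.

Lemma im_le_Cmod (c : C) : Rabs (Im c) <= Cmod c.
Proof. eapply Rle_trans; [apply Rmax_r | apply Rmax_Cmod]. Qed.

Lemma Cmod_le_Re_Im (c : C) : Cmod c <= Rabs (Re c) + Rabs (Im c).
Proof.
pose proof (Rabs_pos (Re c)); pose proof (Rabs_pos (Im c)).
unfold Cmod. rewrite <- (sqrt_Rsqr (Rabs (Re c) + Rabs (Im c))) by lra.
apply sqrt_le_1_alt. pose proof (Rsqr_abs (Re c)); pose proof (Rsqr_abs (Im c)).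
unfold Rsqr, Re, Im in *. simpl. nra.
Qed.

Lemma derivable_pt_lim_remainder_le (f : R -> R) (x l : R) : derivable_pt_lim f x l ->
  forall eps, 0 < eps -> exists delta, 0 < delta /\
    forall h, Rabs h < delta -> Rabs (f (x + h) - f x - l * h) <= eps * Rabs h.
Proof.
intros H eps Heps. destruct (H eps Heps) as [d Hd]. exists d; split; [apply cond_pos|].
intros h Hh. destruct (Req_dec h 0) as [->|Hh0].
- rewrite Rplus_0_r, Rabs_R0. replace (f x - f x - l * 0) with 0 by ring. rewrite Rabs_R0. lra.
- replace (f (x + h) - f x - l * h) with (((f (x + h) - f x) / h - l) * h) by (field; auto).
  rewrite Rabs_mult. apply Rmult_le_compat_r; [apply Rabs_pos|]. left. exact (Hd h Hh0 Hh).
Qed.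

(** * The complex exponential *)

Lemma cexp_plus (a b : C) : cexp (a + b)%C = (cexp a * cexp b)%C.
Proof.
unfold cexp. destruct a as [a1 a2], b as [b1 b2]. simpl.
rewrite exp_plus, cos_plus, sin_plus. apply injective_projections; simpl; ring.
Qed.

Lemma Cmod_cexp (z : C) : Cmod (cexp z) = exp (Re z).
Proof.
rewrite <- (sqrt_Rsqr (exp (Re z))) by (left; apply exp_pos).
unfold Cmod, cexp, Rsqr; simpl. f_equal.
pose proof (sin2_cos2 (Im z)) as E. unfold Rsqr in E.
transitivity (exp (Re z) * exp (Re z) * (sin (Im z) * sin (Im z) + cos (Im z) * cos (Im z))).
- ring.
- rewrite E. ring.
Qed.

Lemma cexp_remainder_le (p q e : R) : Cmod (p, q) <= e -> e <= 1 ->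
  Rabs (exp p - 1 - p) <= e * Rabs p -> Rabs (cos q - 1) <= e * Rabs q ->
  Rabs (sin q - q) <= e * Rabs q ->
  Cmod (cexp (p, q) - RtoC 1 - (p, q))%C <= 8 * e * Cmod (p, q).
Proof.
intros Hm He Hexp Hcos Hsin. set (m := Cmod (p, q)) in *.
assert (Hp : Rabs p <= m) by apply (re_le_Cmod (p, q)).
assert (Hq : Rabs q <= m) by apply (im_le_Cmod (p, q)).
assert (Hm0 : 0 <= m) by apply Cmod_ge_0.
assert (He3 : exp p <= 3).
{ apply Rle_trans with (exp 1); [|apply exp_le_3].
  assert (Hp1 : p <= 1) by (pose proof (Rle_abs p); lra).
  destruct (Req_dec p 1) as [->|Hne]; [lra | left; apply exp_increasing; lra]. }
assert (Hs1 : Rabs (sin q) <= 1) by (apply Rabs_le; apply SIN_bound).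
assert (Hs2 : Rabs (sin q) <= 2 * m).
{ replace (sin q) with ((sin q - q) + q) by ring. eapply Rle_trans; [apply Rabs_triang|]. nra. }
assert (Hre : Rabs (exp p * cos q - 1 - p) <= 4 * e * m).
{ replace (exp p * cos q - 1 - p) with ((exp p - 1 - p) + exp p * (cos q - 1)) by ring.
  eapply Rle_trans; [apply Rabs_triang|].
  rewrite Rabs_mult, (Rabs_pos_eq (exp p)) by (left; apply exp_pos).
  pose proof (exp_pos p). pose proof (Rabs_pos (cos q - 1)). nra. }
assert (Him : Rabs (exp p * sin q - q) <= 4 * e * m).
{ replace (exp p * sin q - q) with ((exp p - 1 - p) * sin q + p * sin q + (sin q - q)) by ring.
  eapply Rle_trans; [apply Rabs_triang|].
  eapply Rle_trans; [apply Rplus_le_compat_r, Rabs_triang|]. rewrite !Rabs_mult.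
  pose proof (Rabs_pos (exp p - 1 - p)). pose proof (Rabs_pos p). pose proof (Rabs_pos (sin q)).
  assert (Rabs (exp p - 1 - p) * Rabs (sin q) <= e * m) by nra.
  assert (Rabs p * Rabs (sin q) <= m * (2 * m)) by (apply Rmult_le_compat; lra).
  nra. }
eapply Rle_trans; [apply Cmod_le_Re_Im|]. unfold cexp, Re, Im in *. simpl in *.
replace (exp p * cos q + - (1) + - p) with (exp p * cos q - 1 - p) by ring.
replace (exp p * sin q + - (0) + - q) with (exp p * sin q - q) by ring. lra.
Qed.

Lemma cexp_remainder_small (eps : R) : 0 < eps -> exists delta, 0 < delta /\
  forall h, Cmod h < delta -> Cmod (cexp h - RtoC 1 - h)%C <= eps * Cmod h.
Proof.
intros Heps. set (e := Rmin 1 (eps / 8)).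
assert (He : 0 < e) by (apply Rmin_pos; lra).
assert (He1 : e <= 1) by apply Rmin_l.
assert (He8 : 8 * e <= eps) by (pose proof (Rmin_r 1 (eps / 8)); fold e in H; lra).
assert (Dexp : derivable_pt_lim exp 0 1) by (rewrite <- exp_0; apply derivable_pt_lim_exp).
assert (Dcos : derivable_pt_lim cos 0 0)
  by (replace 0 with (- sin 0) at 2 by (rewrite sin_0; ring); apply derivable_pt_lim_cos).
assert (Dsin : derivable_pt_lim sin 0 1) by (rewrite <- cos_0; apply derivable_pt_lim_sin).
destruct (derivable_pt_lim_remainder_le _ _ _ Dexp e He) as [d1 [Hd1 H1]].
destruct (derivable_pt_lim_remainder_le _ _ _ Dcos e He) as [d2 [Hd2 H2]].
destruct (derivable_pt_lim_remainder_le _ _ _ Dsin e He) as [d3 [Hd3 H3]].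
exists (Rmin (Rmin d1 d2) (Rmin d3 e)). split; [repeat apply Rmin_pos; lra|].
intros [p q] Hh.
pose proof (re_le_Cmod (p, q)). pose proof (im_le_Cmod (p, q)). unfold Re, Im in *; simpl in *.
pose proof (Rmin_l (Rmin d1 d2) (Rmin d3 e)). pose proof (Rmin_r (Rmin d1 d2) (Rmin d3 e)).
pose proof (Rmin_l d1 d2). pose proof (Rmin_r d1 d2). pose proof (Rmin_l d3 e). pose proof (Rmin_r d3 e).
specialize (H1 p ltac:(lra)). specialize (H2 q ltac:(lra)). specialize (H3 q ltac:(lra)).
rewrite Rplus_0_l, exp_0 in H1. rewrite Rplus_0_l, cos_0 in H2. rewrite Rplus_0_l, sin_0 in H3.
eapply Rle_trans.
- apply cexp_remainder_le with (e := e); try lra.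
  + replace (exp p - 1 - p) with (exp p - 1 - 1 * p) by ring. exact H1.
  + replace (cos q - 1) with (cos q - 1 - 0 * q) by ring. exact H2.
  + replace (sin q - q) with (sin q - 0 - 1 * q) by ring. exact H3.
- apply Rmult_le_compat_r; [apply Cmod_ge_0 | exact He8].
Qed.

Lemma is_Cderive_cexp (z : C) : is_Cderive cexp z (cexp z).
Proof.
apply is_Cderive_iff. intros eps Heps.
assert (Hc : 0 < Cmod (cexp z)) by (rewrite Cmod_cexp; apply exp_pos).
destruct (cexp_remainder_small (eps / Cmod (cexp z))) as [d [Hd H]]; [apply Rdiv_lt_0_compat; lra|].
exists d; split; auto. intros h Hh.
replace (cexp (z + h) - cexp z - cexp z * h)%C with (cexp z * (cexp h - RtoC 1 - h))%C
  by (rewrite cexp_plus; ring).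
rewrite Cmod_mult. specialize (H h Hh).
replace (eps * Cmod h) with (Cmod (cexp z) * (eps / Cmod (cexp z) * Cmod h)) by (field; lra).
apply Rmult_le_compat_l; lra.
Qed.

Lemma is_Cderive_cexp_scal (c z : C) : is_Cderive (fun y => cexp (c * y))%C z (c * cexp (c * z))%C.
Proof. apply (is_Cderive_comp cexp (fun y => c * y)%C); [apply is_Cderive_cexp | apply is_Cderive_scal_id]. Qed.

(** * Mean value inequality on segments *)

Lemma is_derive_Re_of_Cderive (G : C -> C) (t : R) (d : C) :
  is_Cderive G (RtoC t) d -> is_derive (fun s : R => Re (G (RtoC s))) t (Re d).
Proof.
intros HG. apply is_derive_Reals. intros eps Heps.
destruct (proj1 (is_Cderive_iff G (RtoC t) d) HG (eps / 2)) as [delta [Hd HGd]]; [lra|].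
exists (mkposreal delta Hd). intros h Hh0 Hh. simpl in Hh.
specialize (HGd (RtoC h)). rewrite Cmod_R in HGd. specialize (HGd Hh).
replace (RtoC (t + h)) with (RtoC t + RtoC h)%C by (rewrite RtoC_plus; reflexivity).
replace ((Re (G (RtoC t + RtoC h)%C) - Re (G (RtoC t))) / h - Re d)
  with (Re (G (RtoC t + RtoC h) - G (RtoC t) - d * RtoC h)%C / h)
  by (unfold Re; simpl; field; auto).
unfold Rdiv. rewrite Rabs_mult, Rabs_inv.
apply (Rmult_lt_reg_r (Rabs h)); [apply Rabs_pos_lt; auto|].
rewrite Rmult_assoc, Rinv_l, Rmult_1_r by (apply Rabs_no_R0; auto).
pose proof (re_le_Cmod (G (RtoC t + RtoC h) - G (RtoC t) - d * RtoC h)%C).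
pose proof (Rabs_pos_lt h Hh0). nra.
Qed.

Lemma is_derive_Re_segment (F : C -> C) (z w c : C) (t : R) (l : C) :
  is_Cderive F (z + RtoC t * w)%C l ->
  is_derive (fun s : R => Re (c * F (z + RtoC s * w))%C) t (Re (c * (l * w)))%C.
Proof.
intros HF.
assert (Haff : is_Cderive (fun y => z + w * y)%C (RtoC t) (RtoC 0 + w)%C)
  by (apply is_Cderive_plus; [apply is_Cderive_const | apply is_Cderive_scal_id]).
replace (RtoC 0 + w)%C with w in Haff by ring.
replace (z + RtoC t * w)%C with (z + w * RtoC t)%C in HF by ring.
pose proof (is_Cderive_comp F _ (RtoC t) l w HF Haff) as HFaff.
pose proof (is_Cderive_mult (fun _ => c) _ (RtoC t) _ _ (is_Cderive_const c _) HFaff) as HG.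
cbv beta in HG. replace (RtoC 0 * F (z + w * RtoC t) + c * (w * l))%C with (c * (l * w))%C in HG by ring.
apply is_derive_Re_of_Cderive in HG.
apply (is_derive_ext (fun s : R => Re (c * F (z + w * RtoC s))%C)); [|exact HG].
intros s. replace (z + w * RtoC s)%C with (z + RtoC s * w)%C by ring. reflexivity.
Qed.

Lemma Cmod_as_Re_rotation (d : C) : exists c : C, Cmod c <= 1 /\ Re (c * d)%C = Cmod d.
Proof.
destruct (Ceq_dec d (RtoC 0)) as [->|Hd].
- exists (RtoC 0). rewrite Cmod_0. split; [lra | unfold Re; simpl; ring].
- assert (Hm : 0 < Cmod d) by (apply Cmod_gt_0; auto).
  assert (Hm' : RtoC (Cmod d) <> RtoC 0) by (intros E; apply RtoC_inj in E; lra).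
  exists (Cconj d / RtoC (Cmod d))%C. split.
  + rewrite Cmod_div, Cmod_conj, Cmod_R, Rabs_pos_eq by (auto; lra).
    unfold Rdiv. rewrite Rinv_r; lra.
  + replace (Cconj d / RtoC (Cmod d) * d)%C with (d * Cconj d / RtoC (Cmod d))%C by (field; auto).
    rewrite <- Cmod2_conj, <- RtoC_div by lra. unfold Re; simpl. field. lra.
Qed.

(* The real part of a suitable rotation of [F] along the segment, plus [H], is nonincreasing. *)
Lemma segment_mean_value_le (F F' : C -> C) (z w : C) (H H' : R -> R) :
  (forall t, 0 <= t <= 1 -> is_Cderive F (z + RtoC t * w)%C (F' (z + RtoC t * w)%C)) ->
  (forall t, 0 <= t <= 1 -> is_derive H t (H' t)) ->
  (forall t, 0 <= t <= 1 -> Cmod (F' (z + RtoC t * w) * w)%C <= - H' t) ->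
  Cmod (F (z + w) - F z)%C <= H 0 - H 1.
Proof.
intros HF HH Hb.
destruct (Cmod_as_Re_rotation (F (z + w) - F z)%C) as [c [Hc Hcd]].
set (psi := fun t : R => Re (c * F (z + RtoC t * w))%C + H t).
set (psi' := fun t : R => Re (c * (F' (z + RtoC t * w) * w))%C + H' t).
destruct (MVT_cor3 psi psi' 0 1) as [xi [Hxi0 [Hxi1 E]]]; [lra| |].
{ intros t Ht0 Ht1. apply is_derive_Reals.
  apply (@is_derive_plus R_AbsRing R_NormedModule); [apply is_derive_Re_segment, HF | apply HH]; lra. }
assert (Hpsi' : psi' xi <= 0).
{ unfold psi'. specialize (Hb xi (conj Hxi0 Hxi1)).
  set (v := (F' (z + RtoC xi * w) * w)%C) in *.
  pose proof (Rle_abs (Re (c * v))). pose proof (re_le_Cmod (c * v)).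
  rewrite Cmod_mult in *. pose proof (Cmod_ge_0 v). pose proof (Cmod_ge_0 c). nra. }
unfold psi in E.
replace (z + RtoC 1 * w)%C with (z + w)%C in E by ring.
replace (z + RtoC 0 * w)%C with z in E by ring.
assert (E2 : Re (c * F (z + w))%C - Re (c * F z)%C = Cmod (F (z + w) - F z)%C)
  by (rewrite <- Hcd; unfold Re; simpl; ring).
nra.
Qed.

Lemma Cmod_sub_le_on_real_segment (F F' : C -> C) (G G' : R -> R) (x y : R) : x <= y ->
  (forall u, x <= u <= y -> is_Cderive F (RtoC u) (F' (RtoC u))) ->
  (forall u, x <= u <= y -> is_derive G u (G' u)) ->
  (forall u, x <= u <= y -> Cmod (F' (RtoC u)) <= - G' u) ->
  Cmod (F (RtoC y) - F (RtoC x))%C <= G x - G y.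
Proof.
intros Hxy HF HG Hb.
assert (Hin : forall t, 0 <= t <= 1 -> x <= x + t * (y - x) <= y) by (intros t Ht; split; nra).
assert (Hpt : forall t, (RtoC x + RtoC t * RtoC (y - x))%C = RtoC (x + t * (y - x)))
  by (intros t; unfold RtoC; apply injective_projections; simpl; ring).
replace (RtoC y) with (RtoC x + RtoC (y - x))%C by (unfold RtoC; apply injective_projections; simpl; ring).
replace (G x - G y) with (G (x + 0 * (y - x)) - G (x + 1 * (y - x))) by (f_equal; f_equal; ring).
apply (segment_mean_value_le F F' _ _ (fun t => G (x + t * (y - x))) (fun t => (y - x) * G' (x + t * (y - x)))).
- intros t Ht. rewrite Hpt. apply HF, Hin, Ht.
- intros t Ht. apply (is_derive_comp G (fun t => x + t * (y - x))); [apply HG, Hin, Ht|].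
  auto_derive; [auto | ring].
- intros t Ht. rewrite Hpt, Cmod_mult, Cmod_R, Rabs_pos_eq by lra.
  specialize (Hb _ (Hin t Ht)). pose proof (Cmod_ge_0 (F' (RtoC (x + t * (y - x))))).
  replace (- ((y - x) * G' (x + t * (y - x)))) with (- G' (x + t * (y - x)) * (y - x)) by ring.
  apply Rmult_le_compat_r; lra.
Qed.

Lemma Cmod_sub_le_of_deriv_le (F F' : C -> C) (z0 : C) (r c : R) (h : C) :
  (forall z, Cmod (z - z0)%C < r -> is_Cderive F z (F' z)) ->
  (forall z, Cmod (z - z0)%C < r -> Cmod (F' z) <= c) ->
  Cmod h < r -> Cmod (F (z0 + h) - F z0)%C <= c * Cmod h.
Proof.
intros HF Hc Hh.
assert (Hseg : forall t, 0 <= t <= 1 -> Cmod (z0 + RtoC t * h - z0)%C < r).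
{ intros t Ht. replace (z0 + RtoC t * h - z0)%C with (RtoC t * h)%C by ring.
  rewrite Cmod_mult, Cmod_R, Rabs_pos_eq by lra. pose proof (Cmod_ge_0 h). nra. }
replace (c * Cmod h) with (- (c * Cmod h) * 0 - - (c * Cmod h) * 1) by ring.
apply (segment_mean_value_le F F' z0 h (fun t => - (c * Cmod h) * t) (fun _ => - (c * Cmod h))).
- intros t Ht. apply HF, Hseg, Ht.
- intros t Ht. auto_derive; [auto | ring].
- intros t Ht. rewrite Cmod_mult, Ropp_involutive.
  apply Rmult_le_compat_r; [apply Cmod_ge_0 | apply Hc, Hseg, Ht].
Qed.

(** * Complex sequences and infinite products *)

Definition Cn_cv (p : nat -> C) (L : C) : Prop :=
  forall eps, 0 < eps -> exists N0, forall N, (N0 <= N)%nat -> Cmod (p N - L)%C <= eps.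

Lemma Cmod_minus_sym (a b : C) : Cmod (a - b)%C = Cmod (b - a)%C.
Proof. rewrite <- Cmod_opp. f_equal. ring. Qed.

Lemma filterlim_of_Cn_cv (p : nat -> C) (L : C) : Cn_cv p L -> filterlim p eventually (locally L).
Proof.
intros H. apply filterlim_locally. intros [eps Heps].
destruct (H (eps / 2)) as [N0 HN0]; [lra|]. exists N0. intros N HN. specialize (HN0 N HN).
pose proof (re_le_Cmod (p N - L)%C). pose proof (im_le_Cmod (p N - L)%C).
unfold Re, Im in *; simpl in *. split; simpl.
- change (Rabs (fst (p N) + - fst L) < eps). lra.
- change (Rabs (snd (p N) + - snd L) < eps). lra.
Qed.

Lemma Cn_cv_ext p q L : (forall n, p n = q n) -> Cn_cv p L -> Cn_cv q L.
Proof. intros H HL eps Heps. destruct (HL eps Heps) as [N HN]. exists N. intros n Hn. rewrite <- H. auto. Qed.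

Lemma Cn_cv_const (c : C) : Cn_cv (fun _ => c) c.
Proof. intros eps Heps. exists O. intros. replace (c - c)%C with (RtoC 0) by ring. rewrite Cmod_0. lra. Qed.

Lemma Cmod_lim_le p L y c : Cn_cv p L ->
  (exists N0, forall N, (N0 <= N)%nat -> Cmod (p N - y)%C <= c) -> Cmod (L - y)%C <= c.
Proof.
intros H [N0 HN0]. apply Rnot_lt_le. intros Hlt.
destruct (H ((Cmod (L - y)%C - c) / 2)) as [N1 HN1]; [lra|].
specialize (HN1 (N0 + N1)%nat ltac:(lia)). specialize (HN0 (N0 + N1)%nat ltac:(lia)).
pose proof (Cmod_triangle (L - p (N0 + N1)%nat)%C (p (N0 + N1)%nat - y)%C) as T.
replace (L - p (N0 + N1)%nat + (p (N0 + N1)%nat - y))%C with (L - y)%C in T by ring.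
rewrite (Cmod_minus_sym (p _) L) in HN1. lra.
Qed.

Lemma Cn_cv_unique p L M : Cn_cv p L -> Cn_cv p M -> L = M.
Proof.
intros HL HM. apply Ceq_minus, Cmod_eq_0, Rle_antisym; [|apply Cmod_ge_0].
apply Rnot_lt_le. intros Hlt.
assert (H := Cmod_lim_le p L M (Cmod (L - M)%C / 2) HL).
enough (Cmod (L - M)%C <= Cmod (L - M)%C / 2) by lra.
apply H. destruct (HM (Cmod (L - M)%C / 2)) as [N0 HN0]; [lra|]. exists N0. exact HN0.
Qed.

Lemma Cn_cv_minus p q L M : Cn_cv p L -> Cn_cv q M -> Cn_cv (fun n => p n - q n)%C (L - M)%C.
Proof.
intros H1 H2 eps Heps.
destruct (H1 (eps / 2)) as [N1 HN1]; [lra|]. destruct (H2 (eps / 2)) as [N2 HN2]; [lra|].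
exists (N1 + N2)%nat. intros N HN. specialize (HN1 N ltac:(lia)). specialize (HN2 N ltac:(lia)).
replace (p N - q N - (L - M))%C with ((p N - L) + - (q N - M))%C by ring.
eapply Rle_trans; [apply Cmod_triangle|]. rewrite Cmod_opp. lra.
Qed.

Lemma Cn_cv_mult p q L M : Cn_cv p L -> Cn_cv q M -> Cn_cv (fun n => p n * q n)%C (L * M)%C.
Proof.
intros H1 H2 eps Heps.
pose proof (Cmod_ge_0 L). pose proof (Cmod_ge_0 M).
set (e := Rmin 1 (eps / (Cmod L + Cmod M + 2))).
assert (He : 0 < e) by (apply Rmin_pos; [lra | apply Rdiv_lt_0_compat; lra]).
assert (He1 : e <= 1) by apply Rmin_l.
assert (Hee : e * (Cmod L + Cmod M + 2) <= eps).
{ pose proof (Rmin_r 1 (eps / (Cmod L + Cmod M + 2))) as Hr. fold e in Hr.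
  apply (Rmult_le_compat_r (Cmod L + Cmod M + 2)) in Hr; [|lra].
  unfold Rdiv in Hr. rewrite Rmult_assoc, Rinv_l, Rmult_1_r in Hr by lra. lra. }
destruct (H1 e He) as [N1 HN1]. destruct (H2 e He) as [N2 HN2].
exists (N1 + N2)%nat. intros N HN. specialize (HN1 N ltac:(lia)). specialize (HN2 N ltac:(lia)).
replace (p N * q N - L * M)%C with (p N * (q N - M) + M * (p N - L))%C by ring.
eapply Rle_trans; [apply Cmod_triangle|]. rewrite !Cmod_mult.
assert (Hp : Cmod (p N) <= Cmod L + 1).
{ pose proof (Cmod_triangle (p N - L)%C L) as T. replace (p N - L + L)%C with (p N) in T by ring. lra. }
pose proof (Cmod_ge_0 (q N - M)%C). pose proof (Cmod_ge_0 (p N - L)%C).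
assert (Cmod (p N) * Cmod (q N - M)%C <= (Cmod L + 1) * e) by (apply Rmult_le_compat; auto; apply Cmod_ge_0).
assert (Cmod M * Cmod (p N - L)%C <= Cmod M * e) by (apply Rmult_le_compat_l; auto).
nra.
Qed.

Definition limsup_nonpos (t : nat -> R) : Prop :=
  forall eps, 0 < eps -> exists N0, forall N, (N0 <= N)%nat -> t N <= eps.

Lemma limsup_nonpos_scal (k : R) (t : nat -> R) : 0 <= k -> limsup_nonpos t ->
  limsup_nonpos (fun N => k * t N).
Proof.
intros Hk Ht eps Heps.
assert (He : 0 < eps / (k + 1)) by (apply Rdiv_lt_0_compat; lra).
destruct (Ht _ He) as [N0 HN0]. exists N0. intros N HN. specialize (HN0 N HN).
apply Rle_trans with ((k + 1) * (eps / (k + 1))); [|right; field; lra].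
destruct (Rle_lt_dec (t N) 0).
- assert (k * t N <= 0) by (apply Rmult_le_0_l; lra). nra.
- apply Rmult_le_compat; lra.
Qed.

Lemma limsup_nonpos_plus (t t' : nat -> R) : limsup_nonpos t -> limsup_nonpos t' ->
  limsup_nonpos (fun N => t N + t' N).
Proof.
intros Ht Ht' eps Heps.
destruct (Ht (eps / 2)) as [N1 HN1]; [lra|]. destruct (Ht' (eps / 2)) as [N2 HN2]; [lra|].
exists (N1 + N2)%nat. intros N HN. specialize (HN1 N ltac:(lia)). specialize (HN2 N ltac:(lia)). lra.
Qed.

Lemma Cauchy_crit_of_Cmod_bound (x : nat -> C) (t : nat -> R) (f : C -> R) :
  (forall c, Rabs (f c) <= Cmod c) -> (forall a b, f (a - b)%C = f a - f b) ->
  (forall N M, (N <= M)%nat -> Cmod (x M - x N)%C <= t N) ->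
  limsup_nonpos t -> Cauchy_crit (fun n => f (x n)).
Proof.
intros Hf Hfm Hx Ht eps Heps. destruct (Ht (eps / 4)) as [N0 HN0]; [lra|]. exists N0. intros n m Hn Hm.
assert (Hclose : forall k, (k >= N0)%nat -> Rabs (f (x k) - f (x N0)) <= eps / 4).
{ intros k Hk. rewrite <- Hfm. eapply Rle_trans; [apply Hf|].
  eapply Rle_trans; [apply (Hx N0 k Hk) | apply HN0; lia]. }
pose proof (Hclose n Hn). pose proof (Hclose m Hm). unfold Rdist.
replace (f (x n) - f (x m)) with ((f (x n) - f (x N0)) - (f (x m) - f (x N0))) by ring.
eapply Rle_lt_trans; [apply Rabs_triang|]. rewrite Rabs_Ropp. lra.
Qed.

Lemma Cn_cv_of_Cauchy (x : nat -> C) (t : nat -> R) :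
  (forall N M, (N <= M)%nat -> Cmod (x M - x N)%C <= t N) ->
  limsup_nonpos t -> exists L, Cn_cv x L.
Proof.
intros Hx Ht.
destruct (Rcomplete.R_complete _ (Cauchy_crit_of_Cmod_bound x t Re re_le_Cmod
  ltac:(intros; unfold Re; simpl; ring) Hx Ht)) as [lr Hr].
destruct (Rcomplete.R_complete _ (Cauchy_crit_of_Cmod_bound x t Im im_le_Cmod
  ltac:(intros; unfold Im; simpl; ring) Hx Ht)) as [li Hi].
exists (lr, li). intros eps Heps.
destruct (Hr (eps / 2)) as [N1 HN1]; [lra|]. destruct (Hi (eps / 2)) as [N2 HN2]; [lra|].
exists (N1 + N2)%nat. intros N HN. specialize (HN1 N ltac:(lia)). specialize (HN2 N ltac:(lia)).
unfold Rdist in *. eapply Rle_trans; [apply Cmod_le_Re_Im|]. unfold Re, Im in *; simpl.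
replace (fst (x N) + - lr) with (fst (x N) - lr) by ring.
replace (snd (x N) + - li) with (snd (x N) - li) by ring. lra.
Qed.

(* An arbitrary value when [p] diverges. *)
Definition Cn_lim (p : nat -> C) : C := epsilon (inhabits (RtoC 0)) (fun L => Cn_cv p L).

Lemma Cn_lim_correct p : (exists L, Cn_cv p L) -> Cn_cv p (Cn_lim p).
Proof. apply epsilon_spec. Qed.

Fixpoint partial_sum (a : nat -> R) (N : nat) : R :=
  match N with O => 0 | S N' => partial_sum a N' + a N' end.

Fixpoint cprod (u : nat -> C) (N : nat) : C :=
  match N with O => RtoC 1 | S N' => (cprod u N' * u N')%C end.

Lemma partial_sum_sum_f_R0 (a : nat -> R) n : partial_sum a (S n) = sum_f_R0 a n.
Proof. induction n as [|n IH]; simpl in *; [ring | rewrite <- IH; simpl; ring]. Qed.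

Lemma partial_sum_nonneg a : (forall n, 0 <= a n) -> forall N, 0 <= partial_sum a N.
Proof. intros H N; induction N; simpl; [lra | specialize (H N); lra]. Qed.

Lemma nonneg_series_bounds (a : nat -> R) : ex_series a -> (forall n, 0 <= a n) ->
  exists L, (forall N, partial_sum a N <= L) /\
    limsup_nonpos (fun N => L - partial_sum a N).
Proof.
intros [L HL] Hpos. apply is_series_Reals in HL. exists L.
assert (Hgrow : Un_growing (sum_f_R0 a)) by (intros n; simpl; specialize (Hpos (S n)); lra).
split.
- intros [|N].
  + simpl. pose proof (growing_ineq _ _ Hgrow HL O). simpl in *. specialize (Hpos O). lra.
  + rewrite partial_sum_sum_f_R0. exact (growing_ineq _ _ Hgrow HL N).
- intros eps Heps. destruct (HL eps Heps) as [N0 HN0]. exists (S N0). intros [|N] HN; [lia|].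
  rewrite partial_sum_sum_f_R0. specialize (HN0 N ltac:(lia)). unfold Rdist in HN0.
  rewrite Rabs_minus_sym in HN0. pose proof (Rle_abs (L - sum_f_R0 a N)). lra.
Qed.

Lemma ex_series_of_bounded_partial_sums (c : nat -> R) (M : R) :
  (forall n, 0 <= c n) -> (forall N, partial_sum c N <= M) -> ex_series c.
Proof.
intros Hc HM.
destruct (ex_finite_lim_seq_incr (sum_f_R0 c) M) as [l Hl].
- intros n. simpl. specialize (Hc (S n)). lra.
- intros n. rewrite <- partial_sum_sum_f_R0. auto.
- exists l. apply is_series_Reals. apply is_lim_seq_Reals in Hl. exact Hl.
Qed.

Lemma exp_le_compat (x y : R) : x <= y -> exp x <= exp y.
Proof. intros [H|H]; [left; apply exp_increasing; auto | subst; lra]. Qed.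

Section InfiniteProducts.
Variables (u : nat -> C) (a : nat -> R).
Hypothesis Hua : forall k, Cmod (u k - RtoC 1)%C <= a k.

Lemma Cmod_le_one_plus k : Cmod (u k) <= 1 + a k.
Proof.
pose proof (Cmod_triangle (u k - RtoC 1)%C (RtoC 1)) as T.
replace (u k - RtoC 1 + RtoC 1)%C with (u k) in T by ring. rewrite Cmod_1 in T. pose proof (Hua k). lra.
Qed.

Lemma Cmod_cprod_le_exp N : Cmod (cprod u N) <= exp (partial_sum a N).
Proof.
induction N as [|N IH]; simpl.
- rewrite Cmod_1, exp_0. lra.
- rewrite Cmod_mult, exp_plus.
  apply Rmult_le_compat; try apply Cmod_ge_0; [exact IH|].
  eapply Rle_trans; [apply Cmod_le_one_plus | apply exp_ineq1_le].
Qed.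

Lemma cprod_Cauchy_bound (E : R) : (forall N, Cmod (cprod u N) <= E) ->
  forall N M, (N <= M)%nat -> Cmod (cprod u M - cprod u N)%C <= E * (partial_sum a M - partial_sum a N).
Proof.
intros HE N M HNM. induction HNM as [|M HNM IH]; simpl.
- replace (cprod u N - cprod u N)%C with (RtoC 0) by ring. rewrite Cmod_0. lra.
- replace (cprod u M * u M - cprod u N)%C with ((cprod u M - cprod u N) + cprod u M * (u M - RtoC 1))%C
    by ring.
  eapply Rle_trans; [apply Cmod_triangle|]. rewrite Cmod_mult.
  assert (Cmod (cprod u M) * Cmod (u M - RtoC 1)%C <= E * a M)
    by (apply Rmult_le_compat; auto; apply Cmod_ge_0).
  lra.
Qed.

Lemma cprod_cv : ex_series a -> exists L, Cn_cv (cprod u) L.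
Proof.
intros Ha.
assert (Hpos : forall n, 0 <= a n) by (intros n; eapply Rle_trans; [apply Cmod_ge_0 | apply Hua]).
destruct (nonneg_series_bounds a Ha Hpos) as [A [HA HtA]].
assert (HE : forall N, Cmod (cprod u N) <= exp A)
  by (intros N; eapply Rle_trans; [apply Cmod_cprod_le_exp | apply exp_le_compat, HA]).
pose proof (exp_pos A).
apply (Cn_cv_of_Cauchy _ (fun N => exp A * (A - partial_sum a N))).
- intros N M HNM. eapply Rle_trans; [apply (cprod_Cauchy_bound _ HE N M HNM)|].
  apply Rmult_le_compat_l; [lra|]. specialize (HA M). lra.
- apply limsup_nonpos_scal; [lra | exact HtA].
Qed.

End InfiniteProducts.

Lemma cprod_ext (u v : nat -> C) N : (forall k, u k = v k) -> cprod u N = cprod v N.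
Proof. intros H. induction N as [|N IH]; simpl; [reflexivity | rewrite IH, H; reflexivity]. Qed.

Lemma cprod_mult (u v : nat -> C) N : cprod (fun k => u k * v k)%C N = (cprod u N * cprod v N)%C.
Proof. induction N as [|N IH]; simpl; [ring | rewrite IH; ring]. Qed.

Lemma cprod_lim_neq_0 (u v : nat -> C) (L M : C) : (forall k, (u k * v k)%C = RtoC 1) ->
  Cn_cv (cprod u) L -> Cn_cv (cprod v) M -> L <> RtoC 0.
Proof.
intros Huv HL HM HL0.
assert (Hone : forall N, (cprod u N * cprod v N)%C = RtoC 1).
{ intros N. rewrite <- cprod_mult. induction N as [|N IH]; simpl; [reflexivity | rewrite IH, Huv; ring]. }
pose proof (Cn_cv_unique _ _ _ (Cn_cv_ext _ _ _ Hone (Cn_cv_mult _ _ _ _ HL HM)) (Cn_cv_const (RtoC 1))) as E.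
rewrite HL0, Cmult_0_l in E. apply RtoC_inj in E. lra.
Qed.

(** * Differentiability of limits of products *)

Lemma is_Cderive_pointwise_lim (Pn Dn : nat -> C -> C) (P : C -> C) (z0 : C) (r : R) (T : nat -> R) :
  0 < r ->
  (forall N z, Cmod (z - z0)%C < r -> is_Cderive (Pn N) z (Dn N z)) ->
  (forall z, Cmod (z - z0)%C < r -> Cn_cv (fun N => Pn N z) (P z)) ->
  (forall N M z, Cmod (z - z0)%C < r -> (N <= M)%nat -> Cmod (Dn M z - Dn N z)%C <= T N) ->
  limsup_nonpos T -> exists l, is_Cderive P z0 l.
Proof.
intros Hr HD HP HDc HT.
assert (Hz0 : Cmod (z0 - z0)%C < r) by (replace (z0 - z0)%C with (RtoC 0) by ring; rewrite Cmod_0; lra).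
destruct (Cn_cv_of_Cauchy (fun N => Dn N z0) T (fun N M => HDc N M z0 Hz0) HT) as [Q HQ].
exists Q.
assert (HQN : forall N, Cmod (Q - Dn N z0)%C <= T N)
  by (intros N; apply (Cmod_lim_le _ _ _ _ HQ); exists N; intros M HM; apply HDc; auto).
assert (Htail : forall N h, Cmod h < r ->
   Cmod ((P (z0 + h) - P z0) - (Pn N (z0 + h) - Pn N z0))%C <= T N * Cmod h).
{ intros N h Hh.
  assert (Hzh : Cmod (z0 + h - z0)%C < r) by (replace (z0 + h - z0)%C with h by ring; auto).
  apply (Cmod_lim_le (fun M => Pn M (z0 + h) - Pn M z0)%C); [apply Cn_cv_minus; auto|].
  exists N. intros M HM.
  replace (Pn M (z0 + h) - Pn M z0 - (Pn N (z0 + h) - Pn N z0))%C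
    with (Pn M (z0 + h) - Pn N (z0 + h) - (Pn M z0 - Pn N z0))%C by ring.
  apply (Cmod_sub_le_of_deriv_le (fun y => Pn M y - Pn N y)%C (fun y => Dn M y - Dn N y)%C z0 r); auto.
  intros z Hz. apply is_Cderive_minus; auto. }
apply is_Cderive_iff. intros eps Heps.
destruct (HT (eps / 3)) as [N HN]; [lra|]. specialize (HN N (le_n _)).
destruct (proj1 (is_Cderive_iff _ _ _) (HD N z0 Hz0) (eps / 3)) as [d [Hd0 Hd]]; [lra|].
exists (Rmin d r). split; [apply Rmin_pos; auto|].
intros h Hh.
specialize (Hd h (Rlt_le_trans _ _ _ Hh (Rmin_l _ _))).
specialize (Htail N h (Rlt_le_trans _ _ _ Hh (Rmin_r _ _))).
replace (P (z0 + h) - P z0 - Q * h)%C with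
  (((P (z0 + h) - P z0) - (Pn N (z0 + h) - Pn N z0)) + (Pn N (z0 + h) - Pn N z0 - Dn N z0 * h)
   + (- (Q - Dn N z0) * h))%C by ring.
eapply Rle_trans; [apply Cmod_triangle|]. eapply Rle_trans; [apply Rplus_le_compat_r, Cmod_triangle|].
rewrite Cmod_mult, Cmod_opp.
pose proof (Cmod_ge_0 h). specialize (HQN N).
assert (Cmod (Q - Dn N z0)%C * Cmod h <= eps / 3 * Cmod h) by (apply Rmult_le_compat_r; lra).
assert (T N * Cmod h <= eps / 3 * Cmod h) by (apply Rmult_le_compat_r; lra).
lra.
Qed.

Fixpoint cprod_deriv (u du : nat -> C) (N : nat) : C :=
  match N with
  | O => RtoC 0
  | S N' => (cprod_deriv u du N' * u N' + cprod u N' * du N')%C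
  end.

Lemma is_Cderive_cprod (u du : nat -> C -> C) (z : C) :
  (forall n, is_Cderive (u n) z (du n z)) -> forall N,
  is_Cderive (fun y => cprod (fun k => u k y) N) z (cprod_deriv (fun k => u k z) (fun k => du k z) N).
Proof.
intros H N. induction N as [|N IH]; simpl.
- apply is_Cderive_const.
- exact (is_Cderive_mult _ _ z _ _ IH (H N)).
Qed.

Section ProductDerivativeBounds.
Variables (u du : nat -> C) (a b : nat -> R) (E : R).
Hypothesis Hua : forall k, Cmod (u k - RtoC 1)%C <= a k.
Hypothesis Hdub : forall k, Cmod (du k) <= b k.
Hypothesis HE : forall N, Cmod (cprod u N) <= E.

Lemma Cmod_cprod_deriv_le N :
  Cmod (cprod_deriv u du N) <= exp (partial_sum a N) * E * partial_sum b N.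
Proof.
assert (Hap : forall n, 0 <= a n) by (intros n; eapply Rle_trans; [apply Cmod_ge_0 | apply Hua]).
assert (Hbp : forall n, 0 <= b n) by (intros n; eapply Rle_trans; [apply Cmod_ge_0 | apply Hdub]).
assert (HE0 : 0 <= E) by (eapply Rle_trans; [apply Cmod_ge_0 | apply (HE O)]).
induction N as [|N IH]; simpl.
- rewrite Cmod_0. lra.
- eapply Rle_trans; [apply Cmod_triangle|]. rewrite !Cmod_mult, exp_plus.
  pose proof (Cmod_le_one_plus u a Hua N). pose proof (exp_ineq1_le (a N)).
  pose proof (Cmod_ge_0 (cprod_deriv u du N)). pose proof (Cmod_ge_0 (u N)).
  pose proof (partial_sum_nonneg a Hap N). pose proof (partial_sum_nonneg b Hbp N).
  assert (X1 : Cmod (cprod_deriv u du N) * Cmod (u N) <=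
               exp (partial_sum a N) * E * partial_sum b N * exp (a N))
    by (apply Rmult_le_compat; auto; lra).
  assert (X2 : Cmod (cprod u N) * Cmod (du N) <= E * b N)
    by (apply Rmult_le_compat; auto; apply Cmod_ge_0).
  assert (X3 : 1 <= exp (partial_sum a N) * exp (a N)).
  { rewrite <- exp_plus, <- exp_0. apply exp_le_compat. specialize (Hap N). lra. }
  assert (0 <= E * b N) by (apply Rmult_le_pos; auto).
  nra.
Qed.

Lemma cprod_deriv_Cauchy_bound (K : R) : (forall N, Cmod (cprod_deriv u du N) <= K) ->
  forall N M, (N <= M)%nat -> Cmod (cprod_deriv u du M - cprod_deriv u du N)%C <=
    K * (partial_sum a M - partial_sum a N) + E * (partial_sum b M - partial_sum b N).
Proof.
intros HK N M HNM. induction HNM as [|M HNM IH]; simpl.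
- replace (cprod_deriv u du N - cprod_deriv u du N)%C with (RtoC 0) by ring. rewrite Cmod_0. lra.
- replace (cprod_deriv u du M * u M + cprod u M * du M - cprod_deriv u du N)%C
    with ((cprod_deriv u du M - cprod_deriv u du N)
          + (cprod_deriv u du M * (u M - RtoC 1) + cprod u M * du M))%C by ring.
  eapply Rle_trans; [apply Cmod_triangle|].
  assert (Cmod (cprod_deriv u du M * (u M - RtoC 1) + cprod u M * du M)%C <= K * a M + E * b M).
  { eapply Rle_trans; [apply Cmod_triangle|]. rewrite !Cmod_mult.
    apply Rplus_le_compat; apply Rmult_le_compat; auto; apply Cmod_ge_0. }
  lra.
Qed.

End ProductDerivativeBounds.

Lemma is_Cderive_cprod_lim (u du : nat -> C -> C) (a b : nat -> R) (z0 : C) (r : R) :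
  0 < r ->
  (forall n z, Cmod (z - z0)%C < r -> is_Cderive (u n) z (du n z)) ->
  (forall n z, Cmod (z - z0)%C < r -> Cmod (u n z - RtoC 1)%C <= a n) ->
  (forall n z, Cmod (z - z0)%C < r -> Cmod (du n z) <= b n) ->
  ex_series a -> ex_series b ->
  exists l, is_Cderive (fun z => Cn_lim (cprod (fun k => u k z))) z0 l.
Proof.
intros Hr Hd Ha Hb Hsa Hsb.
assert (Hz0 : Cmod (z0 - z0)%C < r) by (replace (z0 - z0)%C with (RtoC 0) by ring; rewrite Cmod_0; lra).
assert (Hap : forall n, 0 <= a n) by (intros n; eapply Rle_trans; [apply Cmod_ge_0 | apply (Ha n z0 Hz0)]).
assert (Hbp : forall n, 0 <= b n) by (intros n; eapply Rle_trans; [apply Cmod_ge_0 | apply (Hb n z0 Hz0)]).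
destruct (nonneg_series_bounds a Hsa Hap) as [A [HA HtA]].
destruct (nonneg_series_bounds b Hsb Hbp) as [B [HB HtB]].
set (E := exp A). assert (HE0 : 0 < E) by apply exp_pos.
assert (HB0 : 0 <= B) by (eapply Rle_trans; [apply (partial_sum_nonneg b Hbp O) | apply HB]).
set (K := E * E * B). assert (HK0 : 0 <= K) by (apply Rmult_le_pos; [nra | auto]).
assert (HPb : forall z N, Cmod (z - z0)%C < r -> Cmod (cprod (fun k => u k z) N) <= E)
  by (intros z N Hz; eapply Rle_trans; [apply (Cmod_cprod_le_exp _ a (fun k => Ha k z Hz)) | apply exp_le_compat, HA]).
assert (HDb : forall z N, Cmod (z - z0)%C < r ->
    Cmod (cprod_deriv (fun k => u k z) (fun k => du k z) N) <= K).
{ intros z N Hz. eapply Rle_trans;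
    [apply (Cmod_cprod_deriv_le _ _ a b E (fun k => Ha k z Hz) (fun k => Hb k z Hz) (fun N => HPb z N Hz))|].
  assert (exp (partial_sum a N) <= E) by apply exp_le_compat, HA.
  pose proof (partial_sum_nonneg b Hbp N). pose proof (HB N). pose proof (exp_pos (partial_sum a N)).
  unfold K. apply Rmult_le_compat; try apply Rmult_le_compat; nra. }
apply (is_Cderive_pointwise_lim (fun N z => cprod (fun k => u k z) N)
  (fun N z => cprod_deriv (fun k => u k z) (fun k => du k z) N) _ z0 r
  (fun N => K * (A - partial_sum a N) + E * (B - partial_sum b N))); auto.
- intros N z Hz. apply is_Cderive_cprod. intros n. apply Hd, Hz.
- intros z Hz. apply Cn_lim_correct. apply (cprod_cv _ a (fun k => Ha k z Hz) Hsa).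
- intros N M z Hz HNM. cbv beta. eapply Rle_trans.
  { apply (cprod_deriv_Cauchy_bound _ _ a b E (fun k => Ha k z Hz) (fun k => Hb k z Hz)
      (fun N => HPb z N Hz) K (fun N => HDb z N Hz) N M HNM). }
  pose proof (HA M). pose proof (HB M).
  apply Rplus_le_compat; apply Rmult_le_compat_l; lra.
- apply limsup_nonpos_plus; apply limsup_nonpos_scal; auto; lra.
Qed.

(** * Estimates for the Euler factors *)

Lemma ln_nonneg (x : R) : 1 <= x -> 0 <= ln x.
Proof. intros Hx. rewrite <- ln_1. apply ln_le; lra. Qed.

Lemma Cmod_cexp_neg_le (s : C) (sig u : R) : sig <= Re s -> 0 <= u ->
  Cmod (cexp (- s * RtoC u))%C <= exp (- sig * u).
Proof.
intros Hs Hu. rewrite Cmod_cexp. apply exp_le_compat.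
unfold Re in *; simpl. nra.
Qed.

Lemma Cmod_rpow_neg_le (x sig : R) (s : C) : 1 <= x -> sig <= Re s ->
  Cmod (rpow_neg x s) <= exp (- sig * ln x).
Proof. intros Hx Hs. apply Cmod_cexp_neg_le; [exact Hs | apply ln_nonneg, Hx]. Qed.

Lemma is_Cderive_rpow_neg (x : R) (s : C) :
  is_Cderive (rpow_neg x) s (- RtoC (ln x) * rpow_neg x s)%C.
Proof.
apply (is_Cderive_ext (fun y => cexp (- RtoC (ln x) * y))%C).
{ intros y. unfold rpow_neg. f_equal. ring. }
replace (rpow_neg x s) with (cexp (- RtoC (ln x) * s))%C by (unfold rpow_neg; f_equal; ring).
apply is_Cderive_cexp_scal.
Qed.

(* [exp (- sig * u) * (1 + K * u)] is minus the derivative of [decay_majorant sig K]. *)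
Definition decay_majorant (sig K u : R) : R :=
  exp (- sig * u) * (1 / sig + K * u / sig + K / (sig * sig)).

Section RpowDifferences.
Variables (al be sig K : R) (s : C).
Hypotheses (Hal : 1 <= al) (Hab : al <= be) (Hsig : 0 < sig) (Hs : sig <= Re s) (HK : Cmod s <= K).

Lemma Cmod_rpow_neg_sub_le :
  Cmod (rpow_neg be s - rpow_neg al s)%C <= K / sig * (exp (- sig * ln al) - exp (- sig * ln be)).
Proof.
pose proof (ln_nonneg al Hal). assert (ln al <= ln be) by (apply ln_le; lra).
rewrite Rmult_minus_distr_l.
apply (Cmod_sub_le_on_real_segment (fun z => cexp (- s * z))%C (fun z => - s * cexp (- s * z))%C
  (fun u => K / sig * exp (- sig * u)) (fun u => - K * exp (- sig * u))); auto.
- intros u Hu. apply is_Cderive_cexp_scal.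
- intros u Hu. auto_derive; [auto | field; lra].
- intros u Hu. rewrite Cmod_mult, Cmod_opp.
  pose proof (Cmod_cexp_neg_le s sig u Hs ltac:(lra)). pose proof (Cmod_ge_0 s).
  pose proof (Cmod_ge_0 (cexp (- s * RtoC u))). replace (- (- K * exp (- sig * u))) with (K * exp (- sig * u)) by ring.
  apply Rmult_le_compat; auto.
Qed.

Lemma Cmod_ln_rpow_neg_sub_le :
  Cmod (RtoC (ln be) * rpow_neg be s - RtoC (ln al) * rpow_neg al s)%C <=
  decay_majorant sig K (ln al) - decay_majorant sig K (ln be).
Proof.
pose proof (ln_nonneg al Hal). assert (ln al <= ln be) by (apply ln_le; lra).
apply (Cmod_sub_le_on_real_segment (fun z => z * cexp (- s * z))%C
  (fun z => RtoC 1 * cexp (- s * z) + z * (- s * cexp (- s * z)))%C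
  (decay_majorant sig K) (fun u => - (exp (- sig * u) * (1 + K * u)))); auto.
- intros u Hu. apply (is_Cderive_mult (fun z => z) (fun z => cexp (- s * z))%C); [apply is_Cderive_id | apply is_Cderive_cexp_scal].
- intros u Hu. unfold decay_majorant. auto_derive; [auto | field; lra].
- intros u Hu. rewrite Ropp_involutive.
  replace (RtoC 1 * cexp (- s * RtoC u) + RtoC u * (- s * cexp (- s * RtoC u)))%C
    with (cexp (- s * RtoC u) * (RtoC 1 + RtoC u * - s))%C by ring.
  rewrite Cmod_mult.
  assert (Cmod (RtoC 1 + RtoC u * - s)%C <= 1 + K * u).
  { eapply Rle_trans; [apply Cmod_triangle|].
    rewrite Cmod_1, Cmod_mult, Cmod_opp, Cmod_R, Rabs_pos_eq by lra.
    pose proof (Cmod_ge_0 s). nra. }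
  apply Rmult_le_compat; try apply Cmod_ge_0; auto. apply Cmod_cexp_neg_le; lra.
Qed.

End RpowDifferences.

Lemma decay_majorant_nonneg sig K u : 0 < sig -> 0 <= K -> 0 <= u -> 0 <= decay_majorant sig K u.
Proof.
intros. unfold decay_majorant. apply Rmult_le_pos; [left; apply exp_pos|].
assert (0 <= K * u / sig) by (apply Rdiv_le_0_compat; nra).
assert (0 <= K / (sig * sig)) by (apply Rdiv_le_0_compat; nra).
assert (0 < 1 / sig) by (apply Rdiv_lt_0_compat; lra). lra.
Qed.

Lemma decay_majorant_decreasing sig K u v : 0 < sig -> 0 <= K -> 0 <= u -> u <= v ->
  decay_majorant sig K v <= decay_majorant sig K u.
Proof.
intros Hs HK Hu Huv. destruct (Req_dec u v) as [->|Hne]; [lra|].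
destruct (MVT_cor2 (decay_majorant sig K) (fun x => - (exp (- sig * x) * (1 + K * x))) u v)
  as [c [E Hc]]; [lra| |].
- intros c Hc. apply is_derive_Reals. unfold decay_majorant. auto_derive; [auto | field; lra].
- assert (0 <= exp (- sig * c) * (1 + K * c))
    by (apply Rmult_le_pos; [left; apply exp_pos | nra]).
  nra.
Qed.

Lemma ln_mul_exp_le (x s e : R) : 1 <= x -> 0 < e ->
  ln x * exp (- s * ln x) <= exp (- (s - e) * ln x) / e.
Proof.
intros Hx He. pose proof (ln_nonneg x Hx).
pose proof (exp_ineq1_le (e * ln x)). pose proof (exp_pos (- s * ln x)).
replace (exp (- (s - e) * ln x)) with (exp (e * ln x) * exp (- s * ln x)) by (rewrite <- exp_plus; f_equal; ring).
apply (Rmult_le_reg_l e); auto.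
replace (e * (exp (e * ln x) * exp (- s * ln x) / e)) with (exp (e * ln x) * exp (- s * ln x)) by (field; lra).
nra.
Qed.

Lemma Cmod_div_le (a b : C) (A m : R) : Cmod a <= A -> 0 < m -> m <= Cmod b -> Cmod (a / b)%C <= A / m.
Proof.
intros Ha Hm Hb. assert (Hb0 : b <> RtoC 0) by (intros E; rewrite E, Cmod_0 in Hb; lra).
rewrite Cmod_div by auto. unfold Rdiv. apply Rmult_le_compat; auto.
- apply Cmod_ge_0.
- left; apply Rinv_0_lt_compat; lra.
- apply Rinv_le_contravar; auto.
Qed.

Definition euler_factor_deriv (x : R) (z : C) : C :=
  (- (RtoC (ln x) * rpow_neg x z) / ((RtoC 1 - rpow_neg x z) * (RtoC 1 - rpow_neg x z)))%C.

Definition factor_ratio (x y : R) (z : C) : C := ((RtoC 1 - rpow_neg y z) * euler_factor x z)%C.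

Definition factor_ratio_deriv (x y : R) (z : C) : C :=
  (RtoC (ln y) * rpow_neg y z * euler_factor x z + (RtoC 1 - rpow_neg y z) * euler_factor_deriv x z)%C.

Definition rpow_gap (sig K x y : R) : R := K / sig * (exp (- sig * ln x) - exp (- sig * ln y)).

Definition ln_rpow_gap (sig K x y : R) : R := decay_majorant sig K (ln x) - decay_majorant sig K (ln y).

Section EulerFactorBounds.
Variables (a0 sig : R) (s : C).
Hypotheses (Ha0 : 1 < a0) (Hsig : 0 < sig) (Hs : sig <= Re s).
Let q := exp (- sig * ln a0).

Lemma rpow_a0_lt_1 : q < 1.
Proof.
unfold q. rewrite <- exp_0. apply exp_increasing.
assert (0 < ln a0) by (rewrite <- ln_1; apply ln_increasing; lra). nra.
Qed.

Lemma Cmod_one_minus_rpow_neg_ge (x : R) : a0 <= x -> 1 - q <= Cmod (RtoC 1 - rpow_neg x s)%C.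
Proof.
intros Hx.
assert (Hq : Cmod (rpow_neg x s) <= q).
{ eapply Rle_trans; [apply Cmod_rpow_neg_le with (sig := sig); lra|].
  apply exp_le_compat. assert (ln a0 <= ln x) by (apply ln_le; lra). nra. }
pose proof (Cmod_triangle (RtoC 1 - rpow_neg x s)%C (rpow_neg x s)) as T.
replace (RtoC 1 - rpow_neg x s + rpow_neg x s)%C with (RtoC 1) in T by ring.
rewrite Cmod_1 in T. lra.
Qed.

Lemma one_minus_rpow_neg_neq_0 (x : R) : a0 <= x -> (RtoC 1 - rpow_neg x s)%C <> RtoC 0.
Proof.
intros Hx E. pose proof (Cmod_one_minus_rpow_neg_ge x Hx) as H.
rewrite E, Cmod_0 in H. pose proof rpow_a0_lt_1. lra.
Qed.

Lemma is_Cderive_euler_factor (x : R) : a0 <= x -> is_Cderive (euler_factor x) s (euler_factor_deriv x s).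
Proof.
intros Hx.
replace (euler_factor_deriv x s) with
  (- (RtoC 0 - - RtoC (ln x) * rpow_neg x s) / ((RtoC 1 - rpow_neg x s) * (RtoC 1 - rpow_neg x s)))%C
  by (unfold euler_factor_deriv; f_equal; f_equal; ring).
apply (is_Cderive_inv_fun (fun z => RtoC 1 - rpow_neg x z)%C).
- apply is_Cderive_minus; [apply is_Cderive_const | apply is_Cderive_rpow_neg].
- apply one_minus_rpow_neg_neq_0, Hx.
Qed.

Lemma Cmod_euler_factor_sub_1_le (x : R) : a0 <= x ->
  Cmod (euler_factor x s - RtoC 1)%C <= exp (- sig * ln x) / (1 - q).
Proof.
intros Hx. pose proof (one_minus_rpow_neg_neq_0 x Hx). pose proof rpow_a0_lt_1.
unfold euler_factor.
replace (/ (1 - rpow_neg x s) - RtoC 1)%C with (rpow_neg x s / (RtoC 1 - rpow_neg x s))%C by (field; auto).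
apply Cmod_div_le; [apply Cmod_rpow_neg_le; lra | lra | apply Cmod_one_minus_rpow_neg_ge, Hx].
Qed.

Lemma Cmod_euler_factor_deriv_le (x : R) : a0 <= x ->
  Cmod (euler_factor_deriv x s) <= ln x * exp (- sig * ln x) / ((1 - q) * (1 - q)).
Proof.
intros Hx. pose proof rpow_a0_lt_1. pose proof (Cmod_one_minus_rpow_neg_ge x Hx).
apply Cmod_div_le.
- rewrite Cmod_opp, Cmod_mult, Cmod_R, Rabs_pos_eq by (apply ln_nonneg; lra).
  apply Rmult_le_compat_l; [apply ln_nonneg; lra | apply Cmod_rpow_neg_le; lra].
- nra.
- rewrite Cmod_mult. apply Rmult_le_compat; lra.
Qed.

Lemma Cmod_factor_ratio_sub_1_le (x y : R) : a0 <= x ->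
  Cmod (factor_ratio x y s - RtoC 1)%C <= Cmod (rpow_neg x s - rpow_neg y s)%C / (1 - q).
Proof.
intros Hx. pose proof (one_minus_rpow_neg_neq_0 x Hx). pose proof rpow_a0_lt_1.
unfold factor_ratio, euler_factor.
replace ((RtoC 1 - rpow_neg y s) * / (1 - rpow_neg x s) - RtoC 1)%C
  with ((rpow_neg x s - rpow_neg y s) / (RtoC 1 - rpow_neg x s))%C by (field; auto).
apply Cmod_div_le; [lra | lra | apply Cmod_one_minus_rpow_neg_ge, Hx].
Qed.

Lemma is_Cderive_factor_ratio (x y : R) : a0 <= x ->
  is_Cderive (factor_ratio x y) s (factor_ratio_deriv x y s).
Proof.
intros Hx.
replace (factor_ratio_deriv x y s) with
  ((RtoC 0 - - RtoC (ln y) * rpow_neg y s) * euler_factor x s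
   + (RtoC 1 - rpow_neg y s) * euler_factor_deriv x s)%C
  by (unfold factor_ratio_deriv; ring).
apply (is_Cderive_mult (fun z => RtoC 1 - rpow_neg y z)%C (euler_factor x)).
- apply is_Cderive_minus; [apply is_Cderive_const | apply is_Cderive_rpow_neg].
- apply is_Cderive_euler_factor, Hx.
Qed.

Variable K : R.
Hypothesis HK : Cmod s <= K.

Lemma Cmod_factor_ratio_deriv_le (x y : R) : a0 <= x -> x <= y ->
  Cmod (factor_ratio_deriv x y s) <=
  ln_rpow_gap sig K x y / (1 - q) + rpow_gap sig K x y * (1 / sig) / ((1 - q) * (1 - q)).
Proof.
intros Hx Hxy. pose proof (one_minus_rpow_neg_neq_0 x Hx). pose proof rpow_a0_lt_1.
pose proof (Cmod_one_minus_rpow_neg_ge x Hx).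
unfold factor_ratio_deriv, euler_factor_deriv, euler_factor.
replace (RtoC (ln y) * rpow_neg y s * / (1 - rpow_neg x s) + (RtoC 1 - rpow_neg y s) *
    (- (RtoC (ln x) * rpow_neg x s) / ((RtoC 1 - rpow_neg x s) * (RtoC 1 - rpow_neg x s))))%C
  with ((RtoC (ln y) * rpow_neg y s - RtoC (ln x) * rpow_neg x s) / (RtoC 1 - rpow_neg x s)
        + (rpow_neg y s - rpow_neg x s) * (RtoC (ln x) * rpow_neg x s) /
          ((RtoC 1 - rpow_neg x s) * (RtoC 1 - rpow_neg x s)))%C by (field; auto).
eapply Rle_trans; [apply Cmod_triangle|]. apply Rplus_le_compat.
- apply Cmod_div_le; [|lra|lra]. apply Cmod_ln_rpow_neg_sub_le; lra.
- apply Cmod_div_le; [| nra | rewrite Cmod_mult; apply Rmult_le_compat; lra].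
  rewrite Cmod_mult. apply Rmult_le_compat; try apply Cmod_ge_0.
  + apply Cmod_rpow_neg_sub_le; lra.
  + rewrite Cmod_mult, Cmod_R, Rabs_pos_eq by (apply ln_nonneg; lra).
    apply Rle_trans with (ln x * exp (- sig * ln x)).
    * apply Rmult_le_compat_l; [apply ln_nonneg; lra | apply Cmod_rpow_neg_le; lra].
    * eapply Rle_trans; [apply ln_mul_exp_le with (e := sig); lra|].
      replace (- (sig - sig) * ln x) with 0 by ring. rewrite exp_0. lra.
Qed.

End EulerFactorBounds.

Lemma euler_factor_mul_factor_ratio (x y : R) (z : C) : (RtoC 1 - rpow_neg y z)%C <> RtoC 0 ->
  (euler_factor y z * factor_ratio x y z)%C = euler_factor x z.
Proof.
intros Hy. unfold factor_ratio, euler_factor.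
rewrite Cmult_assoc, Cinv_l by exact Hy. apply Cmult_1_l.
Qed.

Lemma factor_ratio_mul_swap (x y : R) (z : C) :
  (RtoC 1 - rpow_neg x z)%C <> RtoC 0 -> (RtoC 1 - rpow_neg y z)%C <> RtoC 0 ->
  (factor_ratio x y z * factor_ratio y x z)%C = RtoC 1.
Proof. intros Hx Hy. unfold factor_ratio, euler_factor. field. auto. Qed.

(** * Convergence and holomorphy of the products *)

Lemma disc_Re_Cmod_bounds (z s0 : C) (r : R) : Cmod (z - s0)%C < r ->
  Re s0 - r < Re z /\ Cmod z <= Cmod s0 + r.
Proof.
intros H. split.
- pose proof (re_le_Cmod (z - s0)%C). unfold Re in *; simpl in *.
  pose proof (Rle_abs (- (fst z + - fst s0))). rewrite Rabs_Ropp in *. lra.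
- pose proof (Cmod_triangle s0 (z - s0)%C). replace (s0 + (z - s0))%C with z in * by ring. lra.
Qed.

Lemma ex_series_div_const (a : nat -> R) (c : R) : ex_series a -> ex_series (fun n => a n / c).
Proof.
intros H. apply (ex_series_ext (fun n => scal (/ c) (a n))).
- intros n. unfold scal; simpl. unfold mult; simpl. unfold Rdiv. ring.
- apply (@ex_series_scal R_AbsRing R_NormedModule), H.
Qed.

Lemma ex_series_nonneg_le (c d : nat -> R) : (forall n, 0 <= c n <= d n) -> ex_series d -> ex_series c.
Proof.
intros H. apply (@ex_series_le R_AbsRing R_CompleteNormedModule).
intros n. change (Rabs (c n) <= d n). rewrite Rabs_pos_eq; apply H.
Qed.

Lemma ex_series_exp_ln_le (x y : nat -> R) (lam : R) : 0 <= lam -> (forall n, 0 < x n <= y n) ->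
  ex_series (fun n => exp (- lam * ln (x n))) -> ex_series (fun n => exp (- lam * ln (y n))).
Proof.
intros Hl Hxy. apply ex_series_nonneg_le. intros n. split; [left; apply exp_pos|].
apply exp_le_compat. destruct (Hxy n). assert (ln (x n) <= ln (y n)) by (apply ln_le; lra). nra.
Qed.

Section EulerProduct.
Variables (x : nat -> R) (a0 : R).
Hypotheses (Ha0 : 1 < a0) (Hx : forall n, a0 <= x n).
Hypothesis Hsum : forall lam, 1 < lam -> ex_series (fun n => exp (- lam * ln (x n))).

Lemma euler_product_cv (s : C) : 1 < Re s ->
  Cn_cv (cprod (fun k => euler_factor (x k) s)) (Cn_lim (cprod (fun k => euler_factor (x k) s))).
Proof.
intros Hs. apply Cn_lim_correct.
apply (cprod_cv _ (fun k => exp (- Re s * ln (x k)) / (1 - exp (- Re s * ln a0)))).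
- intros k. apply Cmod_euler_factor_sub_1_le; auto; lra.
- apply ex_series_div_const, Hsum, Hs.
Qed.

Lemma euler_product_derivable (s0 : C) : 1 < Re s0 ->
  exists l, is_Cderive (fun s => Cn_lim (cprod (fun k => euler_factor (x k) s))) s0 l.
Proof.
intros Hs0. set (r := (Re s0 - 1) / 2). set (sig := 1 + r).
assert (Hr : 0 < r) by (unfold r; lra).
set (q := exp (- sig * ln a0)). assert (Hq : q < 1) by (apply rpow_a0_lt_1; unfold sig; lra).
assert (Hreg : forall z, Cmod (z - s0)%C < r -> sig <= Re z)
  by (intros z Hz; destruct (disc_Re_Cmod_bounds z s0 r Hz); unfold sig, r in *; lra).
apply (is_Cderive_cprod_lim _ (fun n z => euler_factor_deriv (x n) z)
  (fun n => exp (- sig * ln (x n)) / (1 - q))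
  (fun n => ln (x n) * exp (- sig * ln (x n)) / ((1 - q) * (1 - q))) s0 r Hr).
- intros n z Hz. apply (is_Cderive_euler_factor a0 sig); auto. unfold sig; lra.
- intros n z Hz. apply (Cmod_euler_factor_sub_1_le a0 sig); auto. unfold sig; lra.
- intros n z Hz. apply (Cmod_euler_factor_deriv_le a0 sig); auto. unfold sig; lra.
- apply ex_series_div_const, Hsum. unfold sig; lra.
- (* [ln x * x^(-sig) <= x^(-(sig - r/2)) / (r/2)], and [sig - r/2 > 1] *)
  apply (ex_series_nonneg_le _ (fun n => exp (- (sig - r / 2) * ln (x n)) / (r / 2) / ((1 - q) * (1 - q)))).
  + intros n. assert (Hxn : 1 <= x n) by (pose proof (Hx n); lra).
    pose proof (ln_nonneg _ Hxn). pose proof (exp_pos (- sig * ln (x n))).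
    assert (0 < (1 - q) * (1 - q)) by nra. split.
    * apply Rdiv_le_0_compat; auto. nra.
    * apply Rmult_le_compat_r; [left; apply Rinv_0_lt_compat; auto|].
      apply ln_mul_exp_le; lra.
  + do 2 apply ex_series_div_const. apply Hsum. unfold sig; lra.
Qed.

End EulerProduct.

Section InterlacedSequences.
Variables (al be : nat -> R) (a0 : R).
Hypotheses (Ha0 : 1 < a0) (Hal : forall n, a0 <= al n).
Hypotheses (Hab : forall n, al n <= be n) (Hba : forall n, be n <= al (S n)).

Lemma be_ge_a0 n : a0 <= be n.
Proof. pose proof (Hal n). pose proof (Hab n). lra. Qed.

(* For [G] nonincreasing and nonnegative the partial sums telescope below [G (ln (al 0))],
   because [ln (be n) <= ln (al (S n))]. *)
Lemma ex_series_interlaced_diff (G : R -> R) :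
  (forall u v, 0 <= u -> u <= v -> G v <= G u) -> (forall u, 0 <= u -> 0 <= G u) ->
  ex_series (fun n => G (ln (al n)) - G (ln (be n))).
Proof.
intros Hdecr Hpos.
assert (Hln0 : forall n, 0 <= ln (al n)) by (intros n; apply ln_nonneg; pose proof (Hal n); lra).
assert (Hlnab : forall n, ln (al n) <= ln (be n)) by (intros n; apply ln_le; [pose proof (Hal n); lra | apply Hab]).
assert (Hlnba : forall n, ln (be n) <= ln (al (S n))) by (intros n; apply ln_le; [pose proof (be_ge_a0 n); lra | apply Hba]).
apply (ex_series_of_bounded_partial_sums _ (G (ln (al O)))).
- intros n. pose proof (Hdecr _ _ (Hln0 n) (Hlnab n)). lra.
- assert (Htel : forall N, partial_sum (fun n => G (ln (al n)) - G (ln (be n))) N <= G (ln (al O)) - G (ln (al N))).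
  { intros N. induction N as [|N IH]; simpl; [lra|].
    pose proof (Hdecr (ln (be N)) _ ltac:(pose proof (Hln0 N); pose proof (Hlnab N); lra) (Hlnba N)). lra. }
  intros N. specialize (Htel N). pose proof (Hpos _ (Hln0 N)). lra.
Qed.

Lemma ex_series_rpow_gap (sig K : R) : 0 < sig -> 0 <= K -> ex_series (fun n => rpow_gap sig K (al n) (be n)).
Proof.
intros Hs HK. unfold rpow_gap.
apply (ex_series_ext (fun n => K / sig * exp (- sig * ln (al n)) - K / sig * exp (- sig * ln (be n)))).
{ intros n. symmetry. apply Rmult_minus_distr_l. }
apply (ex_series_interlaced_diff (fun u => K / sig * exp (- sig * u))).
- intros u v Hu Huv. apply Rmult_le_compat_l; [apply Rdiv_le_0_compat; lra | apply exp_le_compat; nra].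
- intros u Hu. apply Rmult_le_pos; [apply Rdiv_le_0_compat; lra | left; apply exp_pos].
Qed.

Lemma ex_series_ln_rpow_gap (sig K : R) : 0 < sig -> 0 <= K ->
  ex_series (fun n => ln_rpow_gap sig K (al n) (be n)).
Proof.
intros Hs HK. apply ex_series_interlaced_diff.
- intros u v Hu Huv. apply decay_majorant_decreasing; auto.
- intros u Hu. apply decay_majorant_nonneg; auto.
Qed.

Lemma factor_ratio_product_cv (s : C) : 0 < Re s ->
  Cn_cv (cprod (fun k => factor_ratio (al k) (be k) s))
    (Cn_lim (cprod (fun k => factor_ratio (al k) (be k) s))).
Proof.
intros Hs. apply Cn_lim_correct.
apply (cprod_cv _ (fun k => rpow_gap (Re s) (Cmod s) (al k) (be k) / (1 - exp (- Re s * ln a0)))).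
- intros k. eapply Rle_trans; [apply (Cmod_factor_ratio_sub_1_le a0 (Re s)); auto; lra|].
  pose proof (rpow_a0_lt_1 a0 (Re s) Ha0 Hs). apply Rmult_le_compat_r; [left; apply Rinv_0_lt_compat; lra|].
  rewrite Cmod_minus_sym. apply Cmod_rpow_neg_sub_le; auto; try lra. pose proof (Hal k); lra.
- apply ex_series_div_const, ex_series_rpow_gap; [lra | apply Cmod_ge_0].
Qed.

Lemma inverse_factor_ratio_product_cv (s : C) : 0 < Re s ->
  exists L, Cn_cv (cprod (fun k => factor_ratio (be k) (al k) s)) L.
Proof.
intros Hs.
apply (cprod_cv _ (fun k => rpow_gap (Re s) (Cmod s) (al k) (be k) / (1 - exp (- Re s * ln a0)))).
- intros k. eapply Rle_trans; [apply (Cmod_factor_ratio_sub_1_le a0 (Re s)); auto; try lra; apply be_ge_a0|].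
  pose proof (rpow_a0_lt_1 a0 (Re s) Ha0 Hs). apply Rmult_le_compat_r; [left; apply Rinv_0_lt_compat; lra|].
  apply Cmod_rpow_neg_sub_le; auto; try lra. pose proof (Hal k); lra.
- apply ex_series_div_const, ex_series_rpow_gap; [lra | apply Cmod_ge_0].
Qed.

Lemma factor_ratio_product_derivable (s0 : C) : 0 < Re s0 ->
  exists l, is_Cderive (fun s => Cn_lim (cprod (fun k => factor_ratio (al k) (be k) s))) s0 l.
Proof.
intros Hs0. set (r := Re s0 / 2). set (K := Cmod s0 + r).
assert (Hr : 0 < r) by (unfold r; lra).
assert (HK : 0 <= K) by (unfold K; pose proof (Cmod_ge_0 s0); lra).
set (q := exp (- r * ln a0)). assert (Hq : q < 1) by (apply rpow_a0_lt_1; lra).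
assert (Hreg : forall z, Cmod (z - s0)%C < r -> r <= Re z /\ Cmod z <= K)
  by (intros z Hz; destruct (disc_Re_Cmod_bounds z s0 r Hz); unfold K, r in *; split; lra).
apply (is_Cderive_cprod_lim _ (fun n z => factor_ratio_deriv (al n) (be n) z)
  (fun n => rpow_gap r K (al n) (be n) / (1 - q))
  (fun n => ln_rpow_gap r K (al n) (be n) / (1 - q) + rpow_gap r K (al n) (be n) * (1 / r) / ((1 - q) * (1 - q)))
  s0 r Hr).
- intros n z Hz. apply (is_Cderive_factor_ratio a0 r); auto. apply Hreg, Hz.
- intros n z Hz. destruct (Hreg z Hz).
  eapply Rle_trans; [apply (Cmod_factor_ratio_sub_1_le a0 r); auto|].
  apply Rmult_le_compat_r; [left; apply Rinv_0_lt_compat; lra|].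
  rewrite Cmod_minus_sym. apply Cmod_rpow_neg_sub_le; auto; try lra. pose proof (Hal n); lra.
- intros n z Hz. destruct (Hreg z Hz). apply (Cmod_factor_ratio_deriv_le a0 r); auto.
- apply ex_series_div_const, ex_series_rpow_gap; auto.
- apply (@ex_series_plus R_AbsRing R_NormedModule).
  + apply ex_series_div_const, ex_series_ln_rpow_gap; auto.
  + apply ex_series_div_const, (ex_series_ext (fun n => rpow_gap r K (al n) (be n) / r)).
    { intros n. unfold Rdiv. rewrite Rmult_1_l. reflexivity. }
    apply ex_series_div_const, ex_series_rpow_gap; auto.
Qed.

Lemma factor_ratio_product_lim_neq_0 (s : C) : 0 < Re s ->
  Cn_lim (cprod (fun k => factor_ratio (al k) (be k) s)) <> RtoC 0.
Proof.
intros Hs. destruct (inverse_factor_ratio_product_cv s Hs) as [M HM].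
apply (cprod_lim_neq_0 (fun k => factor_ratio (al k) (be k) s) (fun k => factor_ratio (be k) (al k) s) _ M); auto.
- intros k. apply factor_ratio_mul_swap; apply (one_minus_rpow_neg_neq_0 a0 (Re s)); auto; try lra.
  apply be_ge_a0.
- apply factor_ratio_product_cv, Hs.
Qed.

Lemma euler_product_factor_ratio_cv (s : C) (L M : C) : 0 < Re s ->
  Cn_cv (cprod (fun k => euler_factor (be k) s)) L ->
  Cn_cv (cprod (fun k => factor_ratio (al k) (be k) s)) M ->
  Cn_cv (cprod (fun k => euler_factor (al k) s)) (L * M)%C.
Proof.
intros Hs HL HM. apply (Cn_cv_ext _ _ _) with (2 := Cn_cv_mult _ _ _ _ HL HM).
intros N. rewrite <- cprod_mult. apply cprod_ext. intros k.
apply euler_factor_mul_factor_ratio, (one_minus_rpow_neg_neq_0 a0 (Re s)); auto; try lra.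
apply be_ge_a0.
Qed.

End InterlacedSequences.

Lemma euler_partial_cprod (a : nat -> R) (s : C) N :
  euler_partial a s N = cprod (fun k => euler_factor (a k) s) N.
Proof. induction N as [|N IH]; simpl; [reflexivity | rewrite IH; reflexivity]. Qed.

Lemma euler_product_Cn_cv (a : nat -> R) (s : C) (L : C) :
  Cn_cv (cprod (fun k => euler_factor (a k) s)) L -> Cn_cv (euler_partial a s) L.
Proof. apply Cn_cv_ext. intros n. symmetry. apply euler_partial_cprod. Qed.

Lemma incr_seq_ge_first (x : nat -> R) : (forall n, x n <= x (S n)) -> forall n, x O <= x n.
Proof. intros H n. induction n as [|n IH]; [lra | specialize (H n); lra]. Qed.

Theorem mainTheorem3 (alpha beta : nat -> R)
  (halpha_incr : forall n, alpha n <= alpha (S n))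
  (hbeta_incr : forall n, beta n <= beta (S n))
  (hab : forall n, alpha n <= beta n)
  (hba : forall n, beta n <= alpha (S n))
  (halpha1 : 1 < alpha 0%nat)
  (hsum : forall lambda, 1 < lambda ->
     ex_series (fun n => Rpower (alpha n) (- lambda))) :
  exists E1 E2 : C -> C,
    (forall s, half_plane 1 s -> euler_product_converges_to alpha s (E1 s)) /\
    (forall s, half_plane 1 s -> euler_product_converges_to beta s (E2 s)) /\
    analytic_on (half_plane 1) E1 /\
    analytic_on (half_plane 1) E2 /\
    (exists f : C -> C,
       analytic_on (half_plane 0) f /\
       (forall s, half_plane 0 s -> f s <> 0%C) /\
       (forall s, half_plane 1 s -> E1 s = Cmult (E2 s) (f s))).
Proof.
pose proof (incr_seq_ge_first alpha halpha_incr) as Hal.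
pose proof (be_ge_a0 alpha beta _ Hal hab) as Hbe.
assert (Hsb : forall lam, 1 < lam -> ex_series (fun n => exp (- lam * ln (beta n)))).
{ intros lam Hl. apply (ex_series_exp_ln_le alpha); [lra | | apply hsum, Hl].
  intros n. specialize (Hal n). specialize (hab n). split; lra. }
set (E := fun (x : nat -> R) s => Cn_lim (cprod (fun k => euler_factor (x k) s))).
set (f := fun s => Cn_lim (cprod (fun k => factor_ratio (alpha k) (beta k) s))).
exists (E alpha), (E beta). split; [|split; [|split; [|split]]].
- intros s Hs. apply filterlim_of_Cn_cv, euler_product_Cn_cv, (euler_product_cv _ (alpha 0%nat)); auto.
- intros s Hs. apply filterlim_of_Cn_cv, euler_product_Cn_cv, (euler_product_cv _ (alpha 0%nat)); auto.
- intros s Hs. apply (euler_product_derivable _ (alpha 0%nat)); auto.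
- intros s Hs. apply (euler_product_derivable _ (alpha 0%nat)); auto.
- exists f. split; [|split].
  + intros s Hs. apply (factor_ratio_product_derivable _ _ (alpha 0%nat)); auto.
  + intros s Hs. apply (factor_ratio_product_lim_neq_0 _ _ (alpha 0%nat)); auto.
  + intros s Hs. unfold half_plane in Hs.
    apply (Cn_cv_unique (cprod (fun k => euler_factor (alpha k) s)));
      [apply (euler_product_cv _ (alpha 0%nat)); auto|].
    apply (euler_product_factor_ratio_cv _ _ (alpha 0%nat) halpha1 Hal hab); [lra | |].
    * apply (euler_product_cv _ (alpha 0%nat)); auto.
    * apply (factor_ratio_product_cv _ _ (alpha 0%nat)); auto. lra.
Qed.
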